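(* Let $F$ be a field and consider seven lines $l_x,l_y,l_z,l_1,l_2,l_3,l_4$ in the plane $F^2$ such that for each $i\in\{1,2,3,4\}$ the line $l_i$ meets each of $l_x,l_y,l_z$ in exactly one point. For $i\in\{1,2,3,4\}$ let $x_i,y_i,z_i$ be the first coordinates (projections onto the $x$-axis) of the intersection points of $l_i$ with $l_x$, $l_y$, $l_z$ respectively. Then $$\det\begin{pmatrix} x_1-y_1 & x_1-z_1 & z_1(x_1-y_1) & y_1(x_1-z_1)\\ x_2-y_2 & x_2-z_2 & z_2(x_2-y_2) & y_2(x_2-z_2)\\ x_3-y_3 & x_3-z_3 & z_3(x_3-y_3) & y_3(x_3-z_3)\\ x_4-y_4 & x_4-z_4 & z_4(x_4-y_4) & y_4(x_4-z_4) \end{pmatrix}=0.$$ *)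

From mathcomp Require Import all_boot all_algebra.
Set Implicit Arguments. Unset Strict Implicit. Unset Printing Implicit Defensive.
Import GRing.Theory.
Local Open Scope ring_scope.

(* A line in the plane F^2, given by an equation a*x + b*y = c with (a,b) <> (0,0). *)
Record line (F : fieldType) := Line {
  la : F; lb : F; lc : F;
  line_nondeg : (la != 0) || (lb != 0) }.

Definition on_line (F : fieldType) (l : line F) (p : F * F) : Prop :=
  la l * p.1 + lb l * p.2 = lc l.

Definition meet_once (F : fieldType) (l m : line F) : Prop :=
  exists! p : F * F, on_line l p /\ on_line m p.

Definition prop5_matrix (F : fieldType) (x y z : 'I_4 -> F) : 'M[F]_4 :=
  \matrix_(i < 4, j < 4)
    [:: x i - y i; x i - z i; z i * (x i - y i); y i * (x i - z i)]`_j.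

(* The determinant vanishes as soon as the four columns satisfy a nontrivial
   linear relation holding in every row.  If one of l_x, l_y, l_z is vertical, the
   corresponding coordinate is constant and gives such a relation directly.
   Otherwise write l_k as the graph Y = a_k X + c_k; the collinearity of the
   three intersection points on l_i expands to a relation with coefficients
   (c_x - c_z, c_y - c_x, a_x - a_z, a_y - a_x).  These vanish only when
   l_x = l_y = l_z, and then x_i = y_i, so the first column is zero. *)

From mathcomp Require Import all_boot all_algebra ring.
Import GRing.Theory.
Local Open Scope ring_scope.

Section Prop5Matrix.

Context {F : fieldType} {x y z : 'I_4 -> F}.

Lemma det_prop5_matrix_relation {a b c d : F} :
  [|| a != 0, b != 0, c != 0 | d != 0] ->
  (forall i, a * (x i - y i) + b * (x i - z i)
             + c * (z i * (x i - y i)) + d * (y i * (x i - z i)) = 0) ->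
  \det (prop5_matrix x y z) = 0.
Proof.
move=> nz rel; rewrite -det_tr; apply/eqP/det0P.
exists (\row_(j < 4) [:: a; b; c; d]`_j).
  apply: contraTneq nz => /rowP v0.
  have:= v0 ord0; have:= v0 (inord 1); have:= v0 (inord 2); have:= v0 (inord 3).
  by rewrite !mxE !inordK //= => -> -> -> ->; rewrite eqxx.
apply/rowP => i; rewrite !mxE !big_ord_recr big_ord0 /= !mxE /= -[RHS](rel i).
ring.
Qed.

Lemma det_prop5_matrix_cst_x (k : F) :
  (forall i, x i = k) -> \det (prop5_matrix x y z) = 0.
Proof.
move=> xk; apply: (@det_prop5_matrix_relation (- k) k 1 (-1)).
  by rewrite oner_neq0 !orbT.
by move=> i; rewrite xk; ring.
Qed.

Lemma det_prop5_matrix_cst_y (k : F) :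
  (forall i, y i = k) -> \det (prop5_matrix x y z) = 0.
Proof.
move=> yk; apply: (@det_prop5_matrix_relation 0 (- k) 0 1).
  by rewrite oner_neq0 !orbT.
by move=> i; rewrite yk; ring.
Qed.

Lemma det_prop5_matrix_cst_z (k : F) :
  (forall i, z i = k) -> \det (prop5_matrix x y z) = 0.
Proof.
move=> zk; apply: (@det_prop5_matrix_relation (- k) 0 1 0).
  by rewrite oner_neq0 !orbT.
by move=> i; rewrite zk; ring.
Qed.

Lemma det_prop5_matrix_eq_xy :
  (forall i, x i = y i) -> \det (prop5_matrix x y z) = 0.
Proof.
move=> xy; apply: (@det_prop5_matrix_relation 1 0 0 0); first by rewrite oner_neq0.
by move=> i; rewrite xy; ring.
Qed.

Lemma det_prop5_matrix_collinear_graphs {ax ay az cx cy cz : F} :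
  [|| cx - cz != 0, cy - cx != 0, ax - az != 0 | ay - ax != 0] ->
  (forall i, (y i - x i) * ((az * z i + cz) - (ax * x i + cx))
             - (z i - x i) * ((ay * y i + cy) - (ax * x i + cx)) = 0) ->
  \det (prop5_matrix x y z) = 0.
Proof.
move=> nz collinear; apply: (det_prop5_matrix_relation nz) => i.
rewrite -[RHS](collinear i); ring.
Qed.

End Prop5Matrix.

Section Lines.

Context {F : fieldType}.
Implicit Types (l m : line F) (p q r : F * F).

Definition slope l := - la l / lb l.
Definition intercept l := lc l / lb l.

Lemma on_line_collinear {l p q r} :
  on_line l p -> on_line l q -> on_line l r ->
  (q.1 - p.1) * (r.2 - p.2) - (r.1 - p.1) * (q.2 - p.2) = 0.
Proof.
rewrite /on_line => lp lq lr.
have dq : la l * (q.1 - p.1) + lb l * (q.2 - p.2) = 0.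
  by rewrite -(subrr (lc l)) -{1}lq -lp; ring.
have dr : la l * (r.1 - p.1) + lb l * (r.2 - p.2) = 0.
  by rewrite -(subrr (lc l)) -{1}lr -lp; ring.
set T := (_ - _).
have aT : la l * T = (la l * (q.1 - p.1) + lb l * (q.2 - p.2)) * (r.2 - p.2)
                     - (la l * (r.1 - p.1) + lb l * (r.2 - p.2)) * (q.2 - p.2).
  by rewrite /T; ring.
have bT : lb l * T = (q.1 - p.1) * (la l * (r.1 - p.1) + lb l * (r.2 - p.2))
                     - (r.1 - p.1) * (la l * (q.1 - p.1) + lb l * (q.2 - p.2)).
  by rewrite /T; ring.
rewrite dq dr ?mul0r ?mulr0 subrr in aT bT.
have /orP[a0 | b0] := line_nondeg l.
  by move/eqP: aT; rewrite mulf_eq0 (negbTE a0) => /eqP.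
by move/eqP: bT; rewrite mulf_eq0 (negbTE b0) => /eqP.
Qed.

Lemma on_vertical_line {l p} : lb l = 0 -> on_line l p -> p.1 = lc l / la l.
Proof.
move=> b0; rewrite /on_line b0 mul0r addr0 => <-.
have := line_nondeg l; rewrite b0 eqxx orbF => a0.
by field.
Qed.

Lemma on_line_graph {l p} :
  lb l != 0 -> on_line l p -> p.2 = slope l * p.1 + intercept l.
Proof. by rewrite /slope /intercept => b0 <-; field. Qed.

Lemma on_line_same_graph {l m p} :
  lb l != 0 -> lb m != 0 -> slope l = slope m -> intercept l = intercept m ->
  on_line l p -> on_line m p.
Proof.
move=> bl bm sl il /(on_line_graph bl); rewrite sl il /slope /intercept => p2.
by rewrite /on_line p2; field.
Qed.

Lemma meet_once_unique {l m p q} :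
  meet_once l m -> on_line l p /\ on_line m p -> on_line l q /\ on_line m q ->
  p = q.
Proof. by case=> s [_ uniq] /uniq <- /uniq <-. Qed.

End Lines.

Theorem proposition5 (F : fieldType) (lx ly lz : line F) (l : 'I_4 -> line F)
    (px py pz : 'I_4 -> F * F)
    (hx : forall i, meet_once (l i) lx)
    (hy : forall i, meet_once (l i) ly)
    (hz : forall i, meet_once (l i) lz)
    (hpx : forall i, on_line (l i) (px i) /\ on_line lx (px i))
    (hpy : forall i, on_line (l i) (py i) /\ on_line ly (py i))
    (hpz : forall i, on_line (l i) (pz i) /\ on_line lz (pz i)) :
  \det (prop5_matrix (fun i => (px i).1) (fun i => (py i).1) (fun i => (pz i).1)) = 0.
Proof.
have [bx | bx] := eqVneq (lb lx) 0.
  by apply: det_prop5_matrix_cst_x => i; exact: on_vertical_line bx (hpx i).2.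
have [by0 | by0] := eqVneq (lb ly) 0.
  by apply: det_prop5_matrix_cst_y => i; exact: on_vertical_line by0 (hpy i).2.
have [bz | bz] := eqVneq (lb lz) 0.
  by apply: det_prop5_matrix_cst_z => i; exact: on_vertical_line bz (hpz i).2.
have [nz | ] := boolP [|| intercept lx - intercept lz != 0,
   intercept ly - intercept lx != 0, slope lx - slope lz != 0
   | slope ly - slope lx != 0].
  apply: (det_prop5_matrix_collinear_graphs nz) => i.
  have := on_line_collinear (hpx i).1 (hpy i).1 (hpz i).1.
  by rewrite (on_line_graph bx (hpx i).2) (on_line_graph by0 (hpy i).2)
             (on_line_graph bz (hpz i).2).
rewrite !negb_or !negbK !subr_eq0 => /and4P[_ /eqP cyx _ /eqP ayx].
apply: det_prop5_matrix_eq_xy => i.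
have py_on_lx := on_line_same_graph by0 bx ayx cyx (hpy i).2.
by rewrite (meet_once_unique (hx i) (hpx i) (conj (hpy i).1 py_on_lx)).
Qed.
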